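(* Let $S$ be an entropy function for a finite set $X$. Given a function $\mu:2^X\to[0,\infty)$, there exist subsets $A_1\subset\cdots\subset A_m$ of $X$ and a function $\mu':2^X\to[0,\infty)$ supported on $\{A_1,\dots,A_m\}$ such that $\phi_{\mu'}=\phi_\mu$ and \[\sum_{i=1}^m\mu'(A_i)S(A_i)\le\sum_{A\subseteq X}\mu(A)S(A).\]
   Context: An entropy function for a finite set $X$ is a function $S:2^X\to[0,\infty)$ with $S(\emptyset)=0$, $S(A)+S(B)\ge S(A\cap B)+S(A\cup B)$ and $S(A)+S(B)\ge S(A\setminus B)+S(B\setminus A)$ for all $A,B\subseteq X$. For $\mu:2^X\to\mathbb R$, $\phi_\mu:X\to\mathbb R$ is defined by $\phi_\mu(x):=\sum_{A\ni x}\mu(A)$. *)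

From HB Require Import structures.
From mathcomp Require Import all_boot all_order all_algebra.
Set Implicit Arguments. Unset Strict Implicit. Unset Printing Implicit Defensive.
Import Order.TTheory GRing.Theory Num.Theory.
Local Open Scope ring_scope.

Definition entropy_function (R : realFieldType) (X : finType) (S : {set X} -> R) : Prop :=
  [/\ (forall A, 0 <= S A),
      S set0 = 0,
      (forall A B, S (A :&: B) + S (A :|: B) <= S A + S B) &
      (forall A B, S (A :\: B) + S (B :\: A) <= S A + S B)].

Definition phi (R : realFieldType) (X : finType) (mu : {set X} -> R) (x : X) : R :=
  \sum_(A : {set X} | x \in A) mu A.

From HB Require Import structures.
From mathcomp Require Import all_boot all_order all_algebra.
From mathcomp Require Import lra.
Set Implicit Arguments.
Unset Strict Implicit.
Unset Printing Implicit Defensive.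

Import Order.TTheory GRing.Theory Num.Theory.
Local Open Scope ring_scope.

(* Order X as x_1, ..., x_n so that phi_mu is nonincreasing and let
   P_k = {x_1, ..., x_k}.  Then mu'(P_k) = phi_mu(x_k) - phi_mu(x_{k+1}), with
   phi_mu(x_{n+1}) = 0, is nonnegative and its phi telescopes back to phi_mu.
   With the marginal gains y(x_k) = S(P_k) - S(P_{k-1}), exchanging sums gives
   sum_k mu'(P_k) S(P_k) = sum_x y(x) phi_mu(x) = sum_A mu(A) sum_(x in A) y(x),
   and submodularity bounds sum_(x in A) y(x) by S(A): adding x_k to
   A :&: P_{k-1} gains at least y(x_k).  Only S(set0) = 0 and submodularity
   are used. *)

Lemma phiE (R : realFieldType) (X : finType) (mu : {set X} -> R) x :
  phi mu x = \sum_(B : {set X}) mu B * (x \in B)%:R.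
Proof.
rewrite /phi big_mkcond; apply: eq_bigr => B _.
by case: (x \in B); rewrite ?mulr1 ?mulr0.
Qed.

Lemma phi_ge0 (R : realFieldType) (X : finType) (mu : {set X} -> R) x :
  (forall B, 0 <= mu B) -> 0 <= phi mu x.
Proof. by move=> mu_ge0; apply: sumr_ge0. Qed.

Lemma sum_mul_phi (R : realFieldType) (X : finType) (f : X -> R)
    (mu : {set X} -> R) :
  \sum_x f x * phi mu x = \sum_(B : {set X}) mu B * \sum_(x in B) f x.
Proof.
under eq_bigr do rewrite phiE mulr_sumr.
rewrite exchange_big; apply: eq_bigr => B _.
rewrite mulr_sumr [RHS]big_mkcond; apply: eq_bigr => x _.
by case: (x \in B); rewrite ?mulr1 ?mulr0 // mulrC.
Qed.

Section Prefixes.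

Variables (X : finType) (s : seq X).
Hypothesis s_enum : perm_eq s (enum X).

Definition prefix (k : nat) : {set X} := [set x | (index x s < k)%N].

Lemma mem_enum_seq x : x \in s.
Proof. by rewrite (perm_mem s_enum) mem_enum. Qed.

Lemma index_enum_seq_lt x : (index x s < size s)%N.
Proof. by rewrite index_mem mem_enum_seq. Qed.

Lemma index_enum_seq_onto k : (k < size s)%N -> exists x, index x s = k.
Proof.
move=> lt_k; have /hasP[x0 _ _] : has predT s.
  by rewrite has_predT (leq_ltn_trans _ lt_k).
by exists (nth x0 s k); rewrite index_uniq // (perm_uniq s_enum) enum_uniq.
Qed.

Lemma prefix0 : prefix 0 = set0.
Proof. by apply/setP => x; rewrite !inE. Qed.

Lemma notin_prefix_index x : x \notin prefix (index x s).
Proof. by rewrite inE ltnn. Qed.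

Lemma prefixS x : prefix (index x s).+1 = x |: prefix (index x s).
Proof.
apply/setP => y; rewrite !inE ltnS leq_eqVlt; congr (_ || _).
apply/eqP/eqP => [|-> //]; exact: index_inj (mem_enum_seq y) (mem_enum_seq x).
Qed.

Lemma prefix_proper i j : (i < j <= size s)%N -> prefix i \proper prefix j.
Proof.
case/andP=> lt_ij le_js; apply/properP; split.
  by apply/subsetP => x; rewrite !inE => /leq_trans; apply; apply: ltnW.
have [x idx_x] := index_enum_seq_onto (leq_trans lt_ij le_js).
by exists x; rewrite !inE idx_x ?ltnn.
Qed.

Lemma prefix_inj i j : (i <= size s)%N -> (j <= size s)%N ->
  prefix i = prefix j -> i = j.
Proof.
move=> le_is le_js eq_ij.
have neq_proper k l : (k < l <= size s)%N -> prefix k != prefix l.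
  by move/prefix_proper/proper_neq.
case: (ltngtP i j) => // [lt_ij|lt_ji].
  by move: (neq_proper i j); rewrite lt_ij le_js eq_ij eqxx => /(_ isT).
by move: (neq_proper j i); rewrite lt_ji le_is eq_ij eqxx => /(_ isT).
Qed.

Section Marginals.

Variables (R : realDomainType) (S : {set X} -> R).

Definition marginal (x : X) : R :=
  S (prefix (index x s).+1) - S (prefix (index x s)).

Lemma sum_marginal_prefix k : (k <= size s)%N ->
  \sum_(x in prefix k) marginal x = S (prefix k) - S set0.
Proof.
elim: k => [|k IHk] lt_ks; first by rewrite prefix0 big_set0 subrr.
have [x idx_x] := index_enum_seq_onto lt_ks; subst k.
rewrite prefixS big_setU1 ?notin_prefix_index //= IHk ?(ltnW lt_ks) //.
by rewrite /marginal prefixS addrA subrK.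
Qed.

Hypothesis S_submod : forall A B, S (A :&: B) + S (A :|: B) <= S A + S B.

Lemma sum_marginal_le_prefix (A : {set X}) k : (k <= size s)%N ->
  \sum_(x in A :&: prefix k) marginal x <= S (A :&: prefix k) - S set0.
Proof.
elim: k => [|k IHk] lt_ks; first by rewrite prefix0 setI0 big_set0 subrr.
have [x idx_x] := index_enum_seq_onto lt_ks; subst k.
have {}IHk := IHk (ltnW lt_ks).
set P := prefix (index x s); set C := A :&: P.
have [xA|xNA] := boolP (x \in A); last first.
  suff -> : A :&: prefix (index x s).+1 = C by exact: IHk.
  apply/setP => y; rewrite prefixS !inE.
  by case: eqP => [->|]; rewrite ?(negbTE xNA).
have -> : A :&: prefix (index x s).+1 = x |: C.
  by apply/setP => y; rewrite prefixS !inE; case: eqP => [->|]; rewrite ?xA.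
have capP : (x |: C) :&: P = C.
  apply/setP => y; rewrite !inE.
  by case: eqP => [->|_]; rewrite ?ltnn ?andbF // -andbA andbb.
have cupP : (x |: C) :|: P = prefix (index x s).+1.
  by rewrite prefixS -setUA (setUidPr (subsetIr _ _)).
have := S_submod (x |: C) P; rewrite capP cupP.
rewrite big_setU1 /=; last by rewrite !inE ltnn andbF.
move: IHk; rewrite /marginal -/P -/C; lra.
Qed.

Lemma sum_marginal_le (A : {set X}) : \sum_(x in A) marginal x <= S A - S set0.
Proof.
have prefix_size : prefix (size s) = setT.
  by apply/setP => x; rewrite !inE index_enum_seq_lt.
by have := sum_marginal_le_prefix A (leqnn _); rewrite prefix_size setIT.
Qed.

End Marginals.

Section ChainMeasure.

Variables (R : realFieldType) (w : X -> R).

(* Past the end of s the weight reads as 0, so the last gap is the least weight. *)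
Definition weight_gap (k : nat) : R := (map w s)`_k - (map w s)`_k.+1.

Definition chain_measure (B : {set X}) : R :=
  \sum_(k < size s | B == prefix k.+1) weight_gap k.

Lemma chain_measure_prefix (i : 'I_(size s)) :
  chain_measure (prefix i.+1) = weight_gap i.
Proof.
rewrite /chain_measure (big_pred1 i) // => k /=; apply/eqP/eqP => [|-> //].
by move/prefix_inj => /(_ (ltn_ord i) (ltn_ord k)) [/val_inj].
Qed.

Lemma chain_measure_support B :
  chain_measure B != 0 -> exists i : 'I_(size s), B = prefix i.+1.
Proof.
case: (pickP (fun k : 'I_(size s) => B == prefix k.+1)) => [k /eqP -> _|none].
  by exists k.
by rewrite /chain_measure big_pred0 ?eqxx.
Qed.

Lemma sum_chain_measure (g : {set X} -> R) :
  \sum_(B : {set X}) chain_measure B * g B =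
  \sum_(i < size s) weight_gap i * g (prefix i.+1).
Proof.
under eq_bigr do rewrite mulr_suml.
rewrite (exchange_big_dep xpredT) //=.
by apply: eq_bigr => i _; rewrite big_pred1_eq.
Qed.

Lemma phi_chain_measure x : phi chain_measure x = w x.
Proof.
rewrite phiE sum_chain_measure.
transitivity (\sum_(index x s <= i < size s) weight_gap i).
  rewrite big_geq_mkord [RHS]big_mkcond; apply: eq_bigr => i _.
  by rewrite inE ltnS; case: leqP; rewrite ?mulr1 ?mulr0.
rewrite (telescope_sumr_eq (fun k => - (map w s)`_k))
  ?(ltnW (index_enum_seq_lt x)) //.
  rewrite nth_default ?size_map // (nth_map x) ?index_enum_seq_lt //.
  by rewrite nth_index ?mem_enum_seq // oppr0 sub0r opprK.
by move=> k _; rewrite /weight_gap opprK addrC.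
Qed.

Lemma chain_measure_ge0 B :
  (forall x, 0 <= w x) -> sorted >=%R (map w s) -> 0 <= chain_measure B.
Proof.
move=> w_ge0 w_sorted; apply: sumr_ge0 => k _; rewrite subr_ge0.
have [lt_k1s|le_sk1] := ltnP k.+1 (size (map w s)).
  exact: (sortedP 0 w_sorted).
rewrite [X in X <= _]nth_default //.
have [lt_ks|le_sk] := ltnP k (size (map w s)); last by rewrite nth_default.
by have /mapP[x _ ->] := mem_nth 0 lt_ks.
Qed.

Lemma sum_chain_measure_marginal (S : {set X} -> R) :
  \sum_(i < size s) chain_measure (prefix i.+1) * (S (prefix i.+1) - S set0) =
  \sum_x marginal S x * w x.
Proof.
rewrite (eq_bigr (fun i : 'I_(size s) =>
  weight_gap i * \sum_(x in prefix i.+1) marginal S x)).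
  rewrite -(sum_chain_measure (fun B => \sum_(x in B) marginal S x)) -sum_mul_phi.
  by under eq_bigr do rewrite phi_chain_measure.
by move=> i _; rewrite chain_measure_prefix sum_marginal_prefix.
Qed.

End ChainMeasure.

Lemma sum_mul_marginal_le (R : realFieldType) (S mu : {set X} -> R) :
  (forall A B, S (A :&: B) + S (A :|: B) <= S A + S B) -> (forall B, 0 <= mu B) ->
  \sum_x marginal S x * phi mu x <= \sum_(B : {set X}) mu B * (S B - S set0).
Proof.
move=> S_submod mu_ge0; rewrite sum_mul_phi; apply: ler_sum => B _.
by apply: ler_wpM2l; [exact: mu_ge0 | exact: sum_marginal_le].
Qed.

End Prefixes.

Theorem lemma31 (R : realFieldType) (X : finType) (S : {set X} -> R)
  (HS : entropy_function S) (mu : {set X} -> R) (Hmu : forall A, 0 <= mu A) :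
  exists (m : nat) (A : 'I_m -> {set X}) (mu' : {set X} -> R),
    [/\ (forall i j : 'I_m, (i < j)%N -> A i \proper A j),
        (forall B, 0 <= mu' B),
        (forall B, mu' B != 0 -> exists i, B = A i),
        (forall x, phi mu' x = phi mu x) &
        \sum_(i < m) mu' (A i) * S (A i) <= \sum_(B : {set X}) mu B * S B].
Proof.
case: HS => _ S_set0 S_submod _.
pose s := sort (relpre (phi mu) >=%R) (enum X).
have s_enum : perm_eq s (enum X) by rewrite perm_sort.
have phi_sorted : sorted >=%R (map (phi mu) s).
  by rewrite sorted_map; apply: sort_sorted => x y; apply: le_total.
exists (size s), (fun i => prefix s i.+1), (chain_measure s (phi mu)); split.
- by move=> i j lt_ij; apply: (prefix_proper s_enum); rewrite ltnS lt_ij ltn_ord.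
- by move=> B; apply: chain_measure_ge0 => // x; apply: phi_ge0.
- exact: chain_measure_support.
- exact: phi_chain_measure.
have := sum_mul_marginal_le s_enum S_submod Hmu.
rewrite -(sum_chain_measure_marginal s_enum) S_set0.
by under eq_bigr do rewrite subr0; under [X in _ <= X]eq_bigr do rewrite subr0.
Qed.
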